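(* Let $T \ge 1$ be an integer and $p^* \in (0,1]$. For integers $l \ge 1$ and $0 \le n \le l-1$ with $l-n \le T$ put $$P^l(n)=\frac{\prod_{i=0}^{l-n-1}\left(1-\frac{i}{T}\right)}{T^{n}}.$$ Fix a sequence $L_1, L_2, L_3,\dots$ of pairwise distinct items (loopback 3-tuples). A device $D$ is modeled by a function $g_D$ from $\{L_1,L_2,\dots\}$ to $\{0,1,\dots,T-1\}$. For $i\ge 1$, the collision structure of $D$ after $i$ iterations is the partition of $\{L_1,\dots,L_i\}$ into the nonempty fibers of $g_D$ restricted to $\{L_1,\dots,L_i\}$; let $n_i(D)$ be $i$ minus the number of blocks of this partition (the number of independent collisions). The phase-2 procedure processes $L_1, L_2,\dots$ in this fixed order and stops at the least $i$ with $P^i(n_i(D)) \le p^*$; call this index $l(D)$ (assumed to exist). Its output, the device ID of $D$, is the pair $(C_D, l(D))$, where $C_D$ is the set of all pairs $(L_j, B)$ with $j \le l(D)$, $L_j$ not the first (lowest-index) element of its block in the collision structure after $l(D)$ iterations, and $B$ the first element of that block. Let $D$ and $D'$ be devices, and let $l=l(D)$. If the collision structure of $D'$ after $l$ iterations equals the collision structure of $D$ after $l$ iterations, then $D'$ and $D$ have identical device IDs, i.e. $l(D')=l$ and $C_{D'}=C_D$.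
   Context: This models the device-ID computation for the Double-Hash Port Selection algorithm: each loopback 3-tuple $L_i$ is hashed by a keyed hash into one of $T$ perturbation-table cells, and the attacker only observes which tuples share a cell. The order in which the tuples $L_i$ are tested is deterministic and the same for all devices. *)

From mathcomp Require Import all_boot all_order all_algebra.
Set Implicit Arguments. Unset Strict Implicit. Unset Printing Implicit Defensive.
Import Order.TTheory GRing.Theory Num.Theory.
Local Open Scope ring_scope.

Definition Pl (R : realFieldType) (T l n : nat) : R :=
  (\prod_(i < l - n) (1 - i%:R / T%:R)) / (T%:R ^+ n).

Definition iset (X : Type) := X -> Prop.

Definition coll_struct (X : Type) (T : nat) (L : nat -> X) (g : X -> 'I_T)
  (i : nat) : iset (iset X) :=
  fun B => exists k, (1 <= k <= i)%N /\
    B = (fun x => exists j, (1 <= j <= i)%N /\ x = L j /\ g x = g (L k)).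

(* Number of blocks of the collision structure after i iterations
   (= number of distinct values of g on L_1..L_i). *)
Definition nblocks (X : Type) (T : nat) (L : nat -> X) (g : X -> 'I_T) (i : nat) : nat :=
  size (undup [seq g (L j) | j <- iota 1 i]).

Definition ncoll (X : Type) (T : nat) (L : nat -> X) (g : X -> 'I_T) (i : nat) : nat :=
  (i - nblocks L g i)%N.

Definition is_stop (R : realFieldType) (p : R) (X : Type) (T : nat) (L : nat -> X)
  (g : X -> 'I_T) (l : nat) : Prop :=
  [/\ (1 <= l)%N, Pl R T l (ncoll L g l) <= p &
      forall j, (1 <= j < l)%N -> ~ (Pl R T j (ncoll L g j) <= p)].

Definition devC (X : Type) (T : nat) (L : nat -> X) (g : X -> 'I_T) (l : nat)
  : iset (X * X) :=
  fun xb => exists j k (B : iset X),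
    (1 <= j <= l)%N /\ coll_struct L g l B /\ B (L j) /\
    (1 <= k)%N /\ B (L k) /\ (forall m, (1 <= m < k)%N -> ~ B (L m)) /\
    k <> j /\ xb = (L j, L k).

(* Both n_i and the stopping rule depend on g only through its kernel on
   L_1, ..., L_i, i.e. through which pairs of items collide; and the
   collision structure after l iterations determines that kernel for every
   i <= l.  Hence D' passes through the same sequence of values n_i and stops
   at the same index, and C_D is read off the common collision structure. *)

From mathcomp Require Import all_boot all_order all_algebra.
Import Order.TTheory GRing.Theory Num.Theory.
Set Implicit Arguments. Unset Strict Implicit.
Local Open Scope ring_scope.

Lemma size_undup_map_eq (T A B : eqType) (s : seq T) (f : T -> A) (h : T -> B) :
  {in s &, forall x y, (f x == f y) = (h x == h y)} ->
  size (undup (map f s)) = size (undup (map h s)).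
Proof.
elim: s => [//|a s IHs] fh /=.
have fh_s : {in s &, forall x y, (f x == f y) = (h x == h y)}.
  by move=> x y xs ys; apply: fh; rewrite inE ?xs ?ys orbT.
have -> : (f a \in map f s) = (h a \in map h s).
  apply/mapP/mapP => -[y ys /eqP e]; exists y => //; apply/eqP.
    by rewrite -fh ?inE ?ys ?eqxx ?orbT.
  by rewrite fh ?inE ?ys ?eqxx ?orbT.
by case: ifP => _ /=; rewrite IHs.
Qed.

Section CollisionStructure.

Variables (X : Type) (T : nat) (L : nat -> X).

Definition block (g : X -> 'I_T) (l k : nat) : iset X :=
  fun x => exists j, (1 <= j <= l)%N /\ x = L j /\ g x = g (L k).

Lemma block_coll_struct (g : X -> 'I_T) (l k : nat) :
  (1 <= k <= l)%N -> coll_struct L g l (block g l k).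
Proof. by exists k. Qed.

Lemma blockP (g : X -> 'I_T) (l k j : nat) :
  (1 <= j <= l)%N -> block g l k (L j) <-> g (L j) = g (L k).
Proof. by move=> jl; split=> [[i [_ [-> ->]]] | gjk]; last exists j. Qed.

Lemma coll_struct_eq_kernel (g g' : X -> 'I_T) (l j k : nat) :
  coll_struct L g' l = coll_struct L g l ->
  (1 <= j <= l)%N -> (1 <= k <= l)%N ->
  (g' (L j) == g' (L k)) = (g (L j) == g (L k)).
Proof.
move=> Egg' jl kl.
have := block_coll_struct g' kl; rewrite Egg' => -[m [_ Eblock]].
have blockE i : (1 <= i <= l)%N -> (g' (L i) = g' (L k)) <-> (g (L i) = g (L m)).
  move=> il; apply: iff_trans (iff_sym (blockP g' k il)) _.
  by rewrite Eblock; apply: blockP.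
have gkm : g (L k) = g (L m) by apply/blockE.
by rewrite gkm; apply/eqP/eqP; case: (blockE j jl).
Qed.

Lemma ncoll_eq_kernel (g g' : X -> 'I_T) (l : nat) :
  (forall j k, (1 <= j <= l)%N -> (1 <= k <= l)%N ->
     (g' (L j) == g' (L k)) = (g (L j) == g (L k))) ->
  forall i, (i <= l)%N -> ncoll L g' i = ncoll L g i.
Proof.
move=> kerE i il; rewrite /ncoll /nblocks.
rewrite (@size_undup_map_eq _ _ _ _ (fun j => g' (L j)) (fun j => g (L j))) //.
have le_l j : j \in iota 1 i -> (1 <= j <= l)%N.
  by rewrite mem_iota add1n ltnS => /andP[-> ji]; apply: leq_trans il.
by move=> j k js ks; apply: kerE; apply: le_l.
Qed.

Lemma is_stop_eq_ncoll (R : realFieldType) (p : R) (g g' : X -> 'I_T) (l : nat) :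
  (forall i, (i <= l)%N -> ncoll L g' i = ncoll L g i) ->
  is_stop p L g l -> is_stop p L g' l.
Proof.
move=> nE [l_gt0 stop_l before_l]; split; rewrite ?nE //.
by move=> j /andP[j_gt0 jl]; rewrite nE ?(ltnW jl) //; apply: before_l; rewrite j_gt0.
Qed.

End CollisionStructure.

Theorem lemma1 (R : realFieldType) (T : nat) (hT : (1 <= T)%N)
  (p : R) (hp0 : 0 < p) (hp1 : p <= 1)
  (X : Type) (L : nat -> X) (hL : forall i j, (1 <= i)%N -> (1 <= j)%N -> L i = L j -> i = j)
  (g g' : X -> 'I_T) (l : nat) :
  is_stop p L g l ->
  coll_struct L g' l = coll_struct L g l ->
  is_stop p L g' l /\ devC L g' l = devC L g l.
Proof.
move=> stop_g Egg'; split; last by rewrite /devC Egg'.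
apply: is_stop_eq_ncoll stop_g; apply: ncoll_eq_kernel => j k.
exact: coll_struct_eq_kernel Egg'.
Qed.
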